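(* Let $X\subseteq\mathbb{R}$ be dense in $\mathbb{R}$ (with the subspace topology). Then $X$ is a Baire space if and only if $G\cap X$ is dense in $X$ for every dense $G_\delta$ subset $G$ of $\mathbb{R}$.
   Context: A Baire space is a space in which countable intersections of dense open sets are dense. *)

From mathcomp Require Import all_boot all_order all_algebra.
From mathcomp Require Import all_classical all_reals all_analysis.
From mathcomp Require Import borel_hierarchy.
Set Implicit Arguments.
Unset Strict Implicit.
Unset Printing Implicit Defensive.
Local Open Scope classical_set_scope.

Definition baire_space (T : topologicalType) : Prop :=
  forall F : (set T)^nat, (forall i, open (F i) /\ dense (F i)) ->
    dense (\bigcap_i F i).

From mathcomp Require Import all_boot all_order all_algebra.
From mathcomp Require Import all_classical all_reals all_analysis.
From mathcomp Require Import borel_hierarchy.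
Import numFieldNormedType.Exports.
Local Open Scope classical_set_scope.

(* The open sets of a dense subspace X are the traces W ∩ X of open sets W,
   and since X is dense, the trace of an open W is dense in X exactly when W
   is dense.  So the dense open subsets of X are the traces of dense open sets
   of the ambient space, and as traces commute with countable intersections,
   X is Baire iff the traces of dense G_delta sets are dense in X.  Going
   back from traces to X uses that the ambient space is itself Baire, as the
   complete space R is. *)

Lemma denseS (T : topologicalType) (A B : set T) :
  A `<=` B -> dense A -> dense B.
Proof.
move=> AB dA O O0 oO; have [x [Ox Ax]] := dA O O0 oO.
by exists x; split => //; exact: AB.
Qed.

Section dense_subspace.
Context {T : topologicalType} {X : set T}.
Hypothesis dX : dense X.

Local Notation trace W := (set_val @^-1` W : set (set_type X)).

Lemma open_trace (W : set T) : open W -> open (trace W).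
Proof. by move=> oW; exists W. Qed.

Lemma dense_trace (W : set T) : open W -> dense W -> dense (trace W).
Proof.
move=> oW dW O [x Ox] [V oV VO]; rewrite -VO in Ox *.
have VW0 := dW V (ex_intro _ (set_val x) Ox) oV.
have [y [[Vy Wy] Xy]] := dX _ VW0 (openI oV oW).
by exists (exist _ y (mem_set Xy)).
Qed.

Lemma dense_of_trace (W : set T) : dense (trace W) -> dense W.
Proof.
move=> dW O O0 oO; have [y [Oy Xy]] := dX O O0 oO.
have [z [Oz Wz]] := dW (trace O) (ex_intro _ (exist _ y (mem_set Xy)) Oy)
  (open_trace _ oO).
by exists (set_val z).
Qed.

Lemma baire_space_dense_trace : baire_space (set_type X) ->
  forall G : set T, Gdelta G -> dense G -> dense (trace G).
Proof.
move=> bX _ [A oA ->] dG; rewrite preimage_bigcap.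
apply: bX => i; split; first exact: open_trace.
by apply: dense_trace => //; apply: denseS dG; exact: bigcap_inf.
Qed.

Lemma baire_space_of_dense_trace : baire_space T ->
  (forall G : set T, Gdelta G -> dense G -> dense (trace G)) ->
  baire_space (set_type X).
Proof.
move=> bT dtrace F oF.
have /choice[W oWF] i : exists W, open W /\ trace W = F i.
  by have [[W oW <-] _] := oF i; exists W.
have -> : \bigcap_i F i = trace (\bigcap_i W i).
  by rewrite preimage_bigcap; apply: eq_bigcapr => i _; rewrite (oWF i).2.
apply: dtrace; first by exists W => // i; exact: (oWF i).1.
apply: bT => i; split; first exact: (oWF i).1.
by apply: dense_of_trace; rewrite (oWF i).2; exact: (oF i).2.
Qed.

End dense_subspace.

Lemma baire_space_complete (K : realType) (U : completeNormedModType K) :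
  baire_space U.
Proof. exact: Baire. Qed.

Theorem lemma4p6 (R : realType) (X : set R) :
  dense X ->
  (baire_space (set_type X) <->
   (forall G : set R, Gdelta G -> dense G ->
      dense (set_val @^-1` G : set (set_type X)))).
Proof.
move=> dX; split; first exact: baire_space_dense_trace.
by apply: baire_space_of_dense_trace dX _; exact: baire_space_complete.
Qed.
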